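(* Every bitopological space $(X,\tau[tt],\tau[ff])$ that is Hausdorff (i.e. whose associated $\mathbb{B}$-topological space $(X,\tau)$ is Hausdorff) is d-sober.
   Context: $\mathbb{B}=\{0,1,tt,ff\}$ is the four-element Boolean algebra with bottom $0$, top $1$, and $tt,ff$ incomparable complements; $a\to b=\neg a\vee b$. A bitopological space $(X,\tau[tt],\tau[ff])$ corresponds to the $\mathbb{B}$-topology $\tau=\{\lambda\colon X\to\mathbb{B}: \lambda[tt]\in\tau[tt],\ \lambda[ff]\in\tau[ff]\}$, where $\lambda[b]=\{x:\lambda(x)\ge b\}$. Specialization $\mathbb{B}$-order: $\Omega(\tau)(x,y)=\bigwedge_{\lambda\in\tau}(\lambda(x)\to\lambda(y))$. $(X,\tau)$ is $T_0$ if $\Omega(\tau)(x,y)=1=\Omega(\tau)(y,x)$ implies $x=y$; it is $R_1$ if $\Omega(\tau)$, viewed as a map $X\times X\to\mathbb{B}$, is a closed set of the product $\mathbb{B}$-topological space $(X,\tau)\times(X,\tau)$ (the $\mathbb{B}$-topology on $X\times X$ generated by $\{\lambda\circ\pi_1,\lambda\circ\pi_2:\lambda\in\tau\}$ together with constants; a $\mathbb{B}$-valued set $\mu$ is closed if $\neg\mu$ is open); it is Hausdorff if it is $T_0$ and $R_1$. (Equivalently, Hausdorff means: the topological space $(X,\tau[tt]\vee\tau[ff])$ is $T_0$ and both $(X,\tau[tt])$ and $(X,\tau[ff])$ are $R_1$, where a topological space is $R_1$ if any two points with distinct closures of their singletons have disjoint neighbourhoods.) A d-point of $(X,\tau[tt],\tau[ff])$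 is a pair of frame homomorphisms $p_{tt}\colon\tau[tt]\to\{0,1\}$, $p_{ff}\colon\tau[ff]\to\{0,1\}$ (preserving finite meets and arbitrary joins) such that: if $U\in\tau[tt]$, $V\in\tau[ff]$ and $U\cap V=\emptyset$ then $p_{tt}(U)=0$ or $p_{ff}(V)=0$; and if $U\cup V=X$ then $p_{tt}(U)=1$ or $p_{ff}(V)=1$. Each $x\in X$ gives the d-point $[x]$ with $[x]_{tt}(U)=1\iff x\in U$ and $[x]_{ff}(V)=1\iff x\in V$. The space is d-sober if every d-point equals $[x]$ for a unique $x\in X$. *)

From Stdlib Require Import Classical ClassicalDescription.

Set Implicit Arguments.

Inductive B : Type := B0 | B1 | Btt | Bff.

(* the two "coordinates" of an element: b >= tt and b >= ff *)
Definition geTT (b : B) : bool :=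
  match b with B1 | Btt => true | _ => false end.
Definition geFF (b : B) : bool :=
  match b with B1 | Bff => true | _ => false end.

Definition mkB (t f : bool) : B :=
  match t, f with
  | true, true => B1 | true, false => Btt | false, true => Bff | false, false => B0
  end.

Definition Ble (a b : B) : Prop :=
  (geTT a = true -> geTT b = true) /\ (geFF a = true -> geFF b = true).

Definition Bneg (a : B) : B := mkB (negb (geTT a)) (negb (geFF a)).
Definition Bmeet (a b : B) : B := mkB (geTT a && geTT b) (geFF a && geFF b).
Definition Bjoin (a b : B) : B := mkB (geTT a || geTT b) (geFF a || geFF b).
Definition Bimp (a b : B) : B := Bjoin (Bneg a) b.

Definition dec (P : Prop) : bool :=
  if excluded_middle_informative P then true else false.

Definition Binf (S : B -> Prop) : B :=
  mkB (dec (forall b, S b -> geTT b = true)) (dec (forall b, S b -> geFF b = true)).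
Definition Bsup (S : B -> Prop) : B :=
  mkB (dec (exists b, S b /\ geTT b = true)) (dec (exists b, S b /\ geFF b = true)).

Definition is_topology (X : Type) (T : (X -> Prop) -> Prop) : Prop :=
  T (fun _ => True) /\
  (forall U V, T U -> T V -> T (fun x => U x /\ V x)) /\
  (forall F : (X -> Prop) -> Prop, (forall U, F U -> T U) ->
     T (fun x => exists U, F U /\ U x)).

Definition level (X : Type) (l : X -> B) (b : B) : X -> Prop :=
  fun x => Ble b (l x).

(* the B-topology associated with a bitopological space (X, t1 = tau[tt], t2 = tau[ff]) *)
Definition Btop (X : Type) (t1 t2 : (X -> Prop) -> Prop) : (X -> B) -> Prop :=
  fun l => t1 (level l Btt) /\ t2 (level l Bff).

Definition is_Btopology (Y : Type) (T : (Y -> B) -> Prop) : Prop :=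
  T (fun _ => B1) /\
  (forall m n, T m -> T n -> T (fun y => Bmeet (m y) (n y))) /\
  (forall F : (Y -> B) -> Prop, (forall m, F m -> T m) ->
     T (fun y => Bsup (fun b => exists m, F m /\ b = m y))).

Definition Bgenerated (Y : Type) (S : (Y -> B) -> Prop) : (Y -> B) -> Prop :=
  fun m => forall T, is_Btopology T -> (forall n, S n -> T n) -> T m.

Definition Bprod (X : Type) (tau : (X -> B) -> Prop) : (X * X -> B) -> Prop :=
  Bgenerated (fun m =>
    (exists l, tau l /\ m = (fun p => l (fst p))) \/
    (exists l, tau l /\ m = (fun p => l (snd p))) \/
    (exists c, m = (fun _ => c))).

Definition Bclosed (Y : Type) (T : (Y -> B) -> Prop) (m : Y -> B) : Prop :=
  T (fun y => Bneg (m y)).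

Definition Omega (X : Type) (tau : (X -> B) -> Prop) (x y : X) : B :=
  Binf (fun b => exists l, tau l /\ b = Bimp (l x) (l y)).

Definition BT0 (X : Type) (tau : (X -> B) -> Prop) : Prop :=
  forall x y, Omega tau x y = B1 -> Omega tau y x = B1 -> x = y.

Definition BR1 (X : Type) (tau : (X -> B) -> Prop) : Prop :=
  Bclosed (Bprod tau) (fun p => Omega tau (fst p) (snd p)).

Definition BHausdorff (X : Type) (tau : (X -> B) -> Prop) : Prop :=
  BT0 tau /\ BR1 tau.

(* frame homomorphism tau -> {0,1}: values outside tau are irrelevant *)
Definition frame_hom (X : Type) (T : (X -> Prop) -> Prop) (p : (X -> Prop) -> bool) : Prop :=
  p (fun _ => True) = true /\
  (forall U V, T U -> T V -> p (fun x => U x /\ V x) = andb (p U) (p V)) /\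
  (forall F : (X -> Prop) -> Prop, (forall U, F U -> T U) ->
     (p (fun x => exists U, F U /\ U x) = true <-> exists U, F U /\ p U = true)).

Definition dpoint (X : Type) (t1 t2 : (X -> Prop) -> Prop)
    (ptt pff : (X -> Prop) -> bool) : Prop :=
  frame_hom t1 ptt /\ frame_hom t2 pff /\
  (forall U V, t1 U -> t2 V -> (forall x, ~ (U x /\ V x)) ->
     ptt U = false \/ pff V = false) /\
  (forall U V, t1 U -> t2 V -> (forall x, U x \/ V x) ->
     ptt U = true \/ pff V = true).

Definition dpoint_is (X : Type) (t1 t2 : (X -> Prop) -> Prop)
    (ptt pff : (X -> Prop) -> bool) (x : X) : Prop :=
  (forall U, t1 U -> (ptt U = true <-> U x)) /\
  (forall V, t2 V -> (pff V = true <-> V x)).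

Definition d_sober (X : Type) (t1 t2 : (X -> Prop) -> Prop) : Prop :=
  forall ptt pff, dpoint t1 t2 ptt pff ->
    exists x, dpoint_is t1 t2 ptt pff x /\
      forall y, dpoint_is t1 t2 ptt pff y -> y = x.

(* A frame homomorphism p kills a largest open set, its kernel.  The totality
   condition of a d-point prevents the two kernels from covering X, so some x
   lies outside both.  The product B-topology is coarser than the B-topology
   of the two product topologies, so R1 provides, for every open U containing
   y but not x, a rectangle around (y, x) missing the diagonal: both topologies
   are R1.  Hence any y in such a U has an open neighbourhood disjoint from an
   open neighbourhood of x, which p must kill; U would then lie in the kernel,
   so p is evaluation at x.  Points inducing the same d-point satisfy the same
   B-open sets, so T0 gives uniqueness. *)
From Stdlib Require Import Classical ClassicalDescription FunctionalExtensionality PropExtensionality.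
Set Implicit Arguments.

Lemma pred_ext (Y : Type) (U V : Y -> Prop) : (forall y, U y <-> V y) -> U = V.
Proof.
  intros H; apply functional_extensionality; intros y; apply propositional_extensionality; auto.
Qed.

Lemma dec_true (P : Prop) : dec P = true <-> P.
Proof.
  unfold dec; destruct excluded_middle_informative; split; auto; discriminate.
Qed.

Lemma geTT_mkB (t f : bool) : geTT (mkB t f) = t.
Proof. destruct t, f; reflexivity. Qed.

Lemma geFF_mkB (t f : bool) : geFF (mkB t f) = f.
Proof. destruct t, f; reflexivity. Qed.

Lemma Ble_Btt (a : B) : Ble Btt a <-> geTT a = true.
Proof. destruct a; unfold Ble; simpl; intuition discriminate. Qed.

Lemma Ble_Bff (a : B) : Ble Bff a <-> geFF a = true.
Proof. destruct a; unfold Ble; simpl; intuition discriminate. Qed.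

Definition Batom (b : B) : Prop := b = Btt \/ b = Bff.

Lemma Batom_Btt : Batom Btt.
Proof. left; reflexivity. Qed.

Lemma Batom_Bff : Batom Bff.
Proof. right; reflexivity. Qed.

Lemma Ble_B1 (b : B) : Ble b B1.
Proof. destruct b; split; reflexivity. Qed.

Lemma Ble_Bmeet (b a c : B) : Ble b (Bmeet a c) <-> Ble b a /\ Ble b c.
Proof. unfold Ble; destruct b, a, c; simpl; intuition congruence. Qed.

Lemma Ble_Bneg (b a : B) : Batom b -> (Ble b (Bneg a) <-> ~ Ble b a).
Proof. intros [-> | ->]; unfold Ble; destruct a; simpl; intuition congruence. Qed.

Lemma Ble_Bimp (b a c : B) : Batom b -> (Ble b (Bimp a c) <-> (Ble b a -> Ble b c)).
Proof. intros [-> | ->]; unfold Ble; destruct a, c; simpl; intuition congruence. Qed.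

Lemma Ble_Bsup (b : B) (S : B -> Prop) :
  Batom b -> (Ble b (Bsup S) <-> exists c, S c /\ Ble b c).
Proof.
  unfold Bsup; intros [-> | ->].
  - rewrite Ble_Btt, geTT_mkB, dec_true; setoid_rewrite Ble_Btt; reflexivity.
  - rewrite Ble_Bff, geFF_mkB, dec_true; setoid_rewrite Ble_Bff; reflexivity.
Qed.

Lemma Ble_Binf (b : B) (S : B -> Prop) :
  Batom b -> (Ble b (Binf S) <-> forall c, S c -> Ble b c).
Proof.
  unfold Binf; intros [-> | ->].
  - rewrite Ble_Btt, geTT_mkB, dec_true; setoid_rewrite Ble_Btt; reflexivity.
  - rewrite Ble_Bff, geFF_mkB, dec_true; setoid_rewrite Ble_Bff; reflexivity.
Qed.

Lemma B1_of_atoms (a : B) : Ble Btt a -> Ble Bff a -> a = B1.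
Proof. destruct a; unfold Ble; simpl; intuition discriminate. Qed.

Section SpecializationOrder.

Variables (X : Type) (tau : (X -> B) -> Prop).

Lemma Ble_Omega (b : B) (x y : X) : Batom b ->
  (Ble b (Omega tau x y) <-> forall l, tau l -> level l b x -> level l b y).
Proof.
  intros Hb; unfold Omega; rewrite (Ble_Binf _ Hb); split.
  - intros H l Hl; apply (Ble_Bimp _ _ Hb), H; eauto.
  - intros H c (l & Hl & ->); apply (Ble_Bimp _ _ Hb), H; auto.
Qed.

Lemma Omega_refl (b : B) (x : X) : Batom b -> Ble b (Omega tau x x).
Proof. intros Hb; apply (Ble_Omega _ _ Hb); auto. Qed.

Lemma Omega_eq_B1 (x y : X) :
  (forall l b, tau l -> Batom b -> level l b x -> level l b y) -> Omega tau x y = B1.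
Proof.
  intros H; apply B1_of_atoms; apply Ble_Omega;
    [left | intros l Hl | right | intros l Hl]; auto; apply H; auto; red; auto.
Qed.

End SpecializationOrder.

Section Levels.

Variable Y : Type.

Lemma level_B1 (b : B) : level (fun _ : Y => B1) b = fun _ => True.
Proof. apply pred_ext; intros y; split; intros _; [exact I | apply Ble_B1]. Qed.

Lemma level_Bmeet (m n : Y -> B) (b : B) :
  level (fun y => Bmeet (m y) (n y)) b = fun y => level m b y /\ level n b y.
Proof. apply pred_ext; intros y; apply Ble_Bmeet. Qed.

Lemma level_Bsup (F : (Y -> B) -> Prop) (b : B) : Batom b ->
  level (fun y => Bsup (fun c => exists m, F m /\ c = m y)) b =
  fun y => exists U, (exists m, F m /\ U = level m b) /\ U y.
Proof.
  intros Hb; apply pred_ext; intros y; unfold level; rewrite (Ble_Bsup _ Hb); split.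
  - intros (c & (m & Fm & ->) & Hc); exists (level m b); eauto.
  - intros (U & (m & Fm & ->) & Hm); eauto.
Qed.

Lemma Btop_is_Btopology (t1 t2 : (Y -> Prop) -> Prop) :
  is_topology t1 -> is_topology t2 -> is_Btopology (Btop t1 t2).
Proof.
  intros (T1 & I1 & U1) (T2 & I2 & U2); split; [|split].
  - split; rewrite level_B1; [apply T1 | apply T2].
  - intros m n [Hm1 Hm2] [Hn1 Hn2]; split; rewrite level_Bmeet; auto.
  - intros F HF; split; rewrite level_Bsup by (red; auto);
      [apply U1 | apply U2]; intros U (m & Fm & ->); apply HF; auto.
Qed.

End Levels.

Section RectangleTopology.

Variables (X : Type) (t : (X -> Prop) -> Prop).
Hypothesis t_top : is_topology t.

Definition prod_top (W : X * X -> Prop) : Prop :=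
  forall p, W p -> exists A C, t A /\ t C /\ A (fst p) /\ C (snd p) /\
    forall a c, A a -> C c -> W (a, c).

Lemma prod_top_is_topology : is_topology prod_top.
Proof.
  destruct t_top as (T & I & _); split; [|split].
  - intros p _; exists (fun _ => True), (fun _ => True); repeat split; auto.
  - intros U V HU HV p [Up Vp].
    destruct (HU p Up) as (A & C & HA & HC & Ap & Cp & HAC).
    destruct (HV p Vp) as (A' & C' & HA' & HC' & Ap' & Cp' & HAC').
    exists (fun x => A x /\ A' x), (fun x => C x /\ C' x).
    repeat split; auto; [apply HAC | apply HAC']; tauto.
  - intros F HF p (U & FU & Up).
    destruct (HF U FU p Up) as (A & C & HA & HC & Ap & Cp & HAC).
    exists A, C; repeat split; auto; intros a c Aa Cc; exists U; auto.
Qed.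

Lemma prod_top_fst (A : X -> Prop) : t A -> prod_top (fun p => A (fst p)).
Proof.
  intros HA p Ap; exists A, (fun _ => True); repeat split; auto; apply t_top.
Qed.

Lemma prod_top_snd (C : X -> Prop) : t C -> prod_top (fun p => C (snd p)).
Proof.
  intros HC p Cp; exists (fun _ => True), C; repeat split; auto; apply t_top.
Qed.

Lemma prod_top_const (P : Prop) : prod_top (fun _ => P).
Proof.
  intros p HP; exists (fun _ => True), (fun _ => True); repeat split; auto; apply t_top.
Qed.

Lemma prod_top_off_diagonal (W : X * X -> Prop) (x y : X) :
  prod_top W -> W (y, x) -> (forall z, ~ W (z, z)) ->
  exists A C, t A /\ t C /\ A y /\ C x /\ forall z, ~ (A z /\ C z).
Proof.
  intros HW Wyx Hdiag.
  destruct (HW _ Wyx) as (A & C & HA & HC & Ay & Cx & HAC).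
  exists A, C; repeat split; auto; intros z [Az Cz]; exact (Hdiag z (HAC z z Az Cz)).
Qed.

End RectangleTopology.

Lemma Bprod_Btop_sub (X : Type) (t1 t2 : (X -> Prop) -> Prop) (m : X * X -> B) :
  is_topology t1 -> is_topology t2 ->
  Bprod (Btop t1 t2) m -> Btop (prod_top t1) (prod_top t2) m.
Proof.
  intros H1 H2 Hm; apply Hm.
  { apply Btop_is_Btopology; apply prod_top_is_topology; auto. }
  intros n [(l & [Hl1 Hl2] & ->) | [(l & [Hl1 Hl2] & ->) | (c & ->)]]; split.
  - exact (prod_top_fst H1 _ Hl1).
  - exact (prod_top_fst H2 _ Hl2).
  - exact (prod_top_snd H1 _ Hl1).
  - exact (prod_top_snd H2 _ Hl2).
  - exact (prod_top_const H1 (P := Ble _ c)).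
  - exact (prod_top_const H2 (P := Ble _ c)).
Qed.

Definition R1_space (X : Type) (t : (X -> Prop) -> Prop) : Prop :=
  forall U y x, t U -> U y -> ~ U x ->
    exists A C, t A /\ t C /\ A y /\ C x /\ forall z, ~ (A z /\ C z).

Section BitopologicalR1.

Variables (X : Type) (t1 t2 : (X -> Prop) -> Prop).
Hypotheses (t1_top : is_topology t1) (t2_top : is_topology t2).

Lemma Omega_Btop_tt (U : X -> Prop) (x y : X) :
  t1 U -> U x -> Ble Btt (Omega (Btop t1 t2) x y) -> U y.
Proof.
  intros HU Ux Hxy.
  set (l := fun z => mkB (dec (U z)) true).
  assert (Ltt : level l Btt = U).
  { apply pred_ext; intros z; unfold level, l; rewrite Ble_Btt, geTT_mkB; apply dec_true. }
  assert (Lff : level l Bff = fun _ => True).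
  { apply pred_ext; intros z; unfold level, l; rewrite Ble_Bff, geFF_mkB; tauto. }
  assert (Hl : Btop t1 t2 l) by (split; [rewrite Ltt | rewrite Lff; apply t2_top]; auto).
  rewrite <- Ltt in Ux |- *; exact (proj1 (Ble_Omega _ _ _ Batom_Btt) Hxy l Hl Ux).
Qed.

Lemma Omega_Btop_ff (U : X -> Prop) (x y : X) :
  t2 U -> U x -> Ble Bff (Omega (Btop t1 t2) x y) -> U y.
Proof.
  intros HU Ux Hxy.
  set (l := fun z => mkB true (dec (U z))).
  assert (Lff : level l Bff = U).
  { apply pred_ext; intros z; unfold level, l; rewrite Ble_Bff, geFF_mkB; apply dec_true. }
  assert (Ltt : level l Btt = fun _ => True).
  { apply pred_ext; intros z; unfold level, l; rewrite Ble_Btt, geTT_mkB; tauto. }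
  assert (Hl : Btop t1 t2 l) by (split; [rewrite Ltt; apply t1_top | rewrite Lff]; auto).
  rewrite <- Lff in Ux |- *; exact (proj1 (Ble_Omega _ _ _ Batom_Bff) Hxy l Hl Ux).
Qed.

Hypothesis R1 : BR1 (Btop t1 t2).

Lemma BR1_R1_tt : R1_space t1.
Proof.
  destruct (Bprod_Btop_sub t1_top t2_top R1) as [Htt _].
  intros U y x HU Uy Ux; eapply prod_top_off_diagonal; [exact Htt | |].
  - unfold level; simpl; rewrite (Ble_Bneg _ Batom_Btt).
    intros Hyx; exact (Ux (Omega_Btop_tt _ _ HU Uy Hyx)).
  - intros z; unfold level; simpl; rewrite (Ble_Bneg _ Batom_Btt).
    intros Hzz; exact (Hzz (Omega_refl _ _ Batom_Btt)).
Qed.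

Lemma BR1_R1_ff : R1_space t2.
Proof.
  destruct (Bprod_Btop_sub t1_top t2_top R1) as [_ Hff].
  intros U y x HU Uy Ux; eapply prod_top_off_diagonal; [exact Hff | |].
  - unfold level; simpl; rewrite (Ble_Bneg _ Batom_Bff).
    intros Hyx; exact (Ux (Omega_Btop_ff _ _ HU Uy Hyx)).
  - intros z; unfold level; simpl; rewrite (Ble_Bneg _ Batom_Bff).
    intros Hzz; exact (Hzz (Omega_refl _ _ Batom_Bff)).
Qed.

End BitopologicalR1.

Section FrameHomomorphisms.

Variables (X : Type) (t : (X -> Prop) -> Prop) (p : (X -> Prop) -> bool).
Hypotheses (t_top : is_topology t) (p_hom : frame_hom t p).

Definition kernel_open : X -> Prop := fun z => exists U, (t U /\ p U = false) /\ U z.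

Lemma kernel_open_open : t kernel_open.
Proof. apply t_top; intros U [HU _]; exact HU. Qed.

Lemma frame_hom_kernel_open : p kernel_open = false.
Proof.
  pose proof p_hom as (_ & _ & Hsup).
  destruct (p kernel_open) eqn:E; auto.
  apply (Hsup (fun U => t U /\ p U = false)) in E; [|intros U []; auto].
  destruct E as (U & [_ HU] & HU'); congruence.
Qed.

Lemma frame_hom_inhabited (U : X -> Prop) : p U = true -> exists z, U z.
Proof.
  intros pU; apply NNPP; intros Hempty.
  assert (E : U = fun z => exists V, (fun _ : X -> Prop => False) V /\ V z).
  { apply pred_ext; intros z; split; [intros Uz; exfalso; eauto | intros (V & [] & _)]. }
  pose proof p_hom as (_ & _ & Hsup).
  rewrite E in pU; apply Hsup in pU; [destruct pU as (V & [] & _) | intros V []].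
Qed.

Lemma frame_hom_point (x : X) : R1_space t -> ~ kernel_open x ->
  forall U, t U -> (p U = true <-> U x).
Proof.
  pose proof p_hom as (_ & Hmeet & _).
  intros Hsep Hx U HU; split.
  - intros pU; apply NNPP; intros Ux.
    assert (Hcover : forall y, U y -> kernel_open y).
    { intros y Uy.
      destruct (Hsep U y x HU Uy Ux) as (A & C & HA & HC & Ay & Cx & Hdisj).
      exists A; split; auto; split; auto.
      assert (pC : p C = true)
        by (destruct (p C) eqn:E; auto; exfalso; apply Hx; exists C; auto).
      destruct (p A) eqn:pA; auto; exfalso.
      assert (pAC : p (fun z => A z /\ C z) = true) by (rewrite Hmeet, pA, pC; auto).
      destruct (frame_hom_inhabited pAC) as (z & Hz); exact (Hdisj z Hz). }
    assert (E : (fun z => U z /\ kernel_open z) = U) by (apply pred_ext; firstorder).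
    pose proof (Hmeet _ _ HU kernel_open_open) as M.
    rewrite E, frame_hom_kernel_open, pU in M; discriminate.
  - intros Ux; destruct (p U) eqn:E; auto; exfalso; apply Hx; exists U; auto.
Qed.

End FrameHomomorphisms.

Section DPoints.

Variables (X : Type) (t1 t2 : (X -> Prop) -> Prop) (ptt pff : (X -> Prop) -> bool).

Lemma dpoint_kernels_not_cover : is_topology t1 -> is_topology t2 ->
  dpoint t1 t2 ptt pff -> exists x, ~ kernel_open t1 ptt x /\ ~ kernel_open t2 pff x.
Proof.
  intros H1 H2 (Hp & Hq & _ & Htot); apply NNPP; intros Hcover.
  destruct (Htot _ _ (kernel_open_open ptt H1) (kernel_open_open pff H2)) as [E | E].
  - intros x; apply NNPP; intros M; apply Hcover; exists x; tauto.
  - rewrite frame_hom_kernel_open in E; [discriminate | exact Hp].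
  - rewrite frame_hom_kernel_open in E; [discriminate | exact Hq].
Qed.

Lemma dpoint_is_unique (x y : X) : BT0 (Btop t1 t2) ->
  dpoint_is t1 t2 ptt pff x -> dpoint_is t1 t2 ptt pff y -> x = y.
Proof.
  intros HT0 [Hx1 Hx2] [Hy1 Hy2].
  assert (Hsame : forall l b, Btop t1 t2 l -> Batom b -> (level l b x <-> level l b y)).
  { intros l b [Hl1 Hl2] [-> | ->];
      [rewrite <- (Hx1 _ Hl1), <- (Hy1 _ Hl1) | rewrite <- (Hx2 _ Hl2), <- (Hy2 _ Hl2)];
      tauto. }
  apply HT0; apply Omega_eq_B1; intros l b Hl Hb; apply Hsame; auto.
Qed.

End DPoints.

Theorem mainTheorem5 (X : Type) (t1 t2 : (X -> Prop) -> Prop) :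
  is_topology t1 -> is_topology t2 ->
  BHausdorff (Btop t1 t2) ->
  d_sober t1 t2.
Proof.
  intros H1 H2 [HT0 HR1] ptt pff Hd.
  pose proof Hd as (Hp & Hq & _).
  destruct (dpoint_kernels_not_cover H1 H2 Hd) as (x & Hx1 & Hx2).
  assert (Hx : dpoint_is t1 t2 ptt pff x).
  { split.
    - exact (frame_hom_point H1 Hp (BR1_R1_tt H1 H2 HR1) Hx1).
    - exact (frame_hom_point H2 Hq (BR1_R1_ff H1 H2 HR1) Hx2). }
  exists x; split; [exact Hx |].
  intros y Hy; exact (dpoint_is_unique HT0 Hy Hx).
Qed.
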